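(* Let $\Theta$ be a subset of a Polish space with metric $d$, equipped with its Borel $\sigma$-algebra, let $\nu$ be a probability measure on $\Theta$, and let $\{P^\theta:\theta\in\Theta\}$ be probability measures on $(\Omega,\mathcal{F})$ such that $\theta\mapsto P^\theta(A)$ is Borel measurable for each $A\in\mathcal{F}$ and $\theta\mapsto P^\theta$ is continuous in total variation (for every $\theta$ and $\varepsilon>0$ there is $\delta>0$ with $\sup_{A\in\mathcal{F}}|P^\theta(A)-P^{\theta'}(A)|<\varepsilon$ whenever $d(\theta,\theta')<\delta$). Let $\mathbb{P}(A)=\int_\Theta P^\theta(A)\,\nu(\mathrm{d}\theta)$ be the mixture probability measure. Then there exists a Borel set $\Theta^1\subseteq\Theta$ with $\nu(\Theta^1)=1$ such that $P^\theta\ll\mathbb{P}$ for all $\theta\in\Theta^1$. Moreover, letting $c\mathcal{M}^1$ be the set of all countable convex combinations of measures in $\{P^\theta:\theta\in\Theta^1\}$, for every monetary risk measure $\rho$ and every penalty function $\alpha:\mathcal{M}_1\to\mathbb{R}\cup\{+\infty\}$ and all $X\in L^\infty(\mathbb{P})$, $$\sup_{P\in c\mathcal{M}^1}\widehat\rho^P(X)=\widehat\rho^{\mathbb{P}}(X)\quad\text{and}\quad\sup_{P\in c\mathcal{M}^1}\rho^P(X)=\rho^{\mathbb{P}}(X).$$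
   Context: $(\Omega,\mathcal{F})$ is a measurable space, $\mathcal{M}_1$ the set of probability measures on it, $\mathcal{X}$ the space of pointwise bounded $\mathcal{F}$-measurable real functions. A monetary risk measure is $\rho:\mathcal{X}\to\mathbb{R}$ with, pointwise: $X\ge0\Rightarrow\rho(X)\le0$; $X\ge Y\Rightarrow\rho(X)\le\rho(Y)$; $\rho(X+a)=\rho(X)-a$. For $P\in\mathcal{M}_1$ and $X\in L^\infty(P)=L^\infty(\Omega,\mathcal{F},P)$: $\rho^P(X)=\inf\{\rho(\widetilde X):\widetilde X\in\mathcal{X},P(\widetilde X=X)=1\}$, and $\widehat\rho^P(X)=\sup_{Q\in\mathcal{M}_1,Q\ll P}\{\mathbb{E}_Q[-X]-\alpha(Q)\}$. *)

From HB Require Import structures.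
From mathcomp Require Import all_boot all_order all_algebra.
From mathcomp Require Import all_classical all_reals all_analysis.
From mathcomp Require Import measurable_realfun.
Set Implicit Arguments. Unset Strict Implicit. Unset Printing Implicit Defensive.
Import Order.TTheory GRing.Theory Num.Theory.
Local Open Scope classical_set_scope.
Local Open Scope ring_scope.

Section Defs.
Variable R : realType.

Definition is_metric {T : Type} (dT : T -> T -> R) : Prop :=
  (forall x y, dT x y = 0 <-> x = y) /\
  (forall x y, dT x y = dT y x) /\
  (forall x y z, dT x z <= dT x y + dT y z).

Definition complete_metric {T : Type} (dT : T -> T -> R) : Prop :=
  forall u : nat -> T,
    (forall e, 0 < e -> exists N, forall m n, (N <= m)%N -> (N <= n)%N ->
        dT (u m) (u n) < e) ->
    exists l, forall e, 0 < e -> exists N, forall n, (N <= n)%N -> dT (u n) l < e.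

Definition separable_metric {T : Type} (dT : T -> T -> R) : Prop :=
  exists S : set T, countable S /\
    forall x e, 0 < e -> exists2 s, S s & dT x s < e.

Definition polish_metric {T : Type} (dT : T -> T -> R) : Prop :=
  is_metric dT /\ complete_metric dT /\ separable_metric dT.

Definition metric_open {T : Type} (dT : T -> T -> R) (U : set T) : Prop :=
  forall x, U x -> exists2 r, 0 < r & forall y, dT x y < r -> U y.

Definition is_borel_of {d} {T : measurableType d} (dT : T -> T -> R) : Prop :=
  forall A : set T, measurable A <-> <<s metric_open dT >> A.

Variables (dO : measure_display) (Om : measurableType dO).

Definition bounded_measurable (X : Om -> R) : Prop :=
  measurable_fun setT X /\ exists M : R, forall w, `|X w| <= M.

(** Monetary risk measure (axioms required on X only). *)
Definition monetary_risk_measure (rho : (Om -> R) -> R) : Prop :=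
  (forall X, bounded_measurable X -> (forall w, 0 <= X w) -> rho X <= 0) /\
  (forall X Y, bounded_measurable X -> bounded_measurable Y ->
     (forall w, Y w <= X w) -> rho X <= rho Y) /\
  (forall X (a : R), bounded_measurable X ->
     rho (fun w => X w + a) = rho X - a).

Definition abs_cont (Q P : set Om -> \bar R) : Prop :=
  forall A, measurable A -> P A = 0%E -> Q A = 0%E.

Definition Linfty (P : set Om -> \bar R) (X : Om -> R) : Prop :=
  measurable_fun setT X /\ exists M : R, P [set w | M < `|X w|] = 0%E.

Definition rho_P (rho : (Om -> R) -> R) (P : set Om -> \bar R) (X : Om -> R)
  : \bar R :=
  ereal_inf [set (rho Y)%:E | Y in
    [set Y | bounded_measurable Y /\ P [set w | Y w = X w] = 1%E]].

Definition rhohat_P (alpha : probability Om R -> \bar R)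
  (P : set Om -> \bar R) (X : Om -> R) : \bar R :=
  ereal_sup [set (\int[Q]_w (- X w)%:E - alpha Q)%E | Q in
    [set Q : probability Om R | abs_cont Q P]].

End Defs.

From HB Require Import structures.
From mathcomp Require Import all_boot all_order all_algebra.
From mathcomp Require Import all_classical all_reals all_analysis.
From mathcomp Require Import measurable_realfun.
From mathcomp Require Import lra.
Import Order.TTheory GRing.Theory Num.Theory.
Local Open Scope classical_set_scope.
Local Open Scope ring_scope.

(** Let [Θ¹] be the support of [ν]: the points all of whose balls have
positive [ν]-measure; its complement is a countable union of null balls, so
[ν(Θ¹) = 1].  If [P^θ(A) > 0] for some [θ ∈ Θ¹], total-variation continuity
keeps [P^θ'(A)] above a positive constant on a ball around [θ], which has
positive [ν]-measure, so [ℙ(A) > 0]: every [P^θ] with [θ ∈ Θ¹] is dominated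
by [ℙ], hence so is every countable convex combination of them.  Conversely,
for a dense sequence [θ_n] in [Θ¹] the combination [P₀ = Σ 2^-(n+1) P^θ_n]
dominates [ℙ]: if [P₀(A) = 0] then [P^θ_n(A) = 0] for all [n], hence by
continuity [P^θ(A) = 0] on all of [Θ¹], and [ℙ(A) = 0].  Finally [P ≪ M]
gives [ρ̂^P(X) ≤ ρ̂^M(X)] and [ρ^P(X) ≤ ρ^M(X)], so both suprema over [cM¹]
are attained at [P₀], where they equal the values at [ℙ]; no property of [ρ]
or [α] is needed. *)

Lemma ereal_sup_attained {R : realType} (S : set (\bar R)) v :
  ubound S v -> S v -> ereal_sup S = v.
Proof.
by move=> Sv Sv'; apply/eqP; rewrite eq_le ge_ereal_sup //= ereal_sup_ubound.
Qed.

Section risk_functionals.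
Context {R : realType} {dO : measure_display} {Om : measurableType dO}.
Implicit Types (P Q M : set Om -> \bar R) (X : Om -> R).

Lemma abs_cont_trans P Q M : abs_cont P Q -> abs_cont Q M -> abs_cont P M.
Proof. by move=> PQ QM A mA /(QM A mA) /(PQ A mA). Qed.

Lemma rhohat_P_le alpha P M X :
  abs_cont P M -> (rhohat_P alpha P X <= rhohat_P alpha M X)%E.
Proof.
move=> PM; apply: ge_ereal_sup => _ [Q QP <-].
by apply: ereal_sup_ubound; exists Q => //; exact: abs_cont_trans QP PM.
Qed.

Definition setC_mass1 P := forall E, measurable E -> (P E + P (~` E) = 1)%E.

Lemma setC_mass1_eq1 {P E} : setC_mass1 P -> measurable E ->
  (P E = 1 <-> P (~` E) = 0)%E.
Proof.
move=> P1 mE; have PE := P1 E mE.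
split=> [|PEC0]; last by rewrite PEC0 adde0 in PE.
move=> PE1; move: PE; rewrite PE1.
by case: (P (~` E)) => [r [] r0| |] //; congr EFin; lra.
Qed.

Lemma measurable_eqfun {X Y} : measurable_fun setT X -> measurable_fun setT Y ->
  measurable [set w | Y w = X w].
Proof.
move=> mX mY; have -> : [set w | Y w = X w] = setT `&` ((Y \- X) @^-1` [set 0]).
  apply/seteqP; split => w /=; first by move=> ->; rewrite subrr.
  by move=> [_ /subr0_eq].
exact: (measurable_funB mY mX) measurableT _ (measurable_set1 _).
Qed.

Lemma rho_P_le rho P M X : abs_cont P M -> setC_mass1 P -> setC_mass1 M ->
  measurable_fun setT X -> (rho_P rho P X <= rho_P rho M X)%E.
Proof.
move=> PM P1 M1 mX; apply: le_ereal_inf_tmp => _ [Y [bY MY] <-].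
apply: ereal_inf_lbound; exists Y => //; split => //.
have mE := measurable_eqfun mX bY.1.
apply/(setC_mass1_eq1 P1 mE).2/PM; first exact: measurableC.
exact/(setC_mass1_eq1 M1 mE).1.
Qed.

Lemma risk_sups_dominated {C : set (set Om -> \bar R)} {M P0 rho alpha X} :
  measurable_fun setT X -> (forall P, C P -> abs_cont P M /\ setC_mass1 P) ->
  C P0 -> abs_cont M P0 -> setC_mass1 M ->
    ereal_sup [set rhohat_P alpha P X | P in C] = rhohat_P alpha M X /\
    ereal_sup [set rho_P rho P X | P in C] = rho_P rho M X.
Proof.
move=> mX CM CP0 MP0 M1; have [P0M P01] := CM P0 CP0.
split; apply: ereal_sup_attained.
- by move=> _ [P /CM[PM _] <-]; exact: rhohat_P_le.
- by exists P0 => //; apply/eqP; rewrite eq_le !rhohat_P_le.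
- by move=> _ [P /CM[PM P1] <-]; exact: rho_P_le.
- by exists P0 => //; apply/eqP; rewrite eq_le !rho_P_le.
Qed.

Lemma setC_mass1_probability (P : probability Om R) : setC_mass1 P.
Proof.
move=> E mE; rewrite -measureU ?setUv ?setICr //; last exact: measurableC.
exact: probability_setT.
Qed.

End risk_functionals.

Lemma nneseries_ge_term {R : realType} (u : nat -> \bar R) n :
  (forall k, 0 <= u k)%E -> (u n <= \sum_(0 <= k <oo) u k)%E.
Proof.
move=> u0; apply: le_trans (nneseries_lim_ge n.+1 _); last by move=> *.
by rewrite big_nat_recr //= leeDr // sume_ge0.
Qed.

Section probability_series.
Context {R : realType} {dO : measure_display} {Om : measurableType dO}.
Variables (lam : nat -> R) (Ps : nat -> probability Om R).

Definition prob_series : set Om -> \bar R :=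
  fun A => (\sum_(0 <= n <oo) ((lam n)%:E * Ps n A))%E.

Lemma setC_mass1_prob_series : (forall n, 0 <= lam n) ->
  (\sum_(0 <= n <oo) (lam n)%:E)%E = 1%E -> setC_mass1 prob_series.
Proof.
move=> lam0 lam1 E mE; rewrite -nneseriesD; last 2 first.
- by move=> n _ _; rewrite mule_ge0 // lee_fin.
- by move=> n _ _; rewrite mule_ge0 // lee_fin.
rewrite -lam1; apply: eq_eseriesr => n _.
by rewrite -ge0_muleDr // setC_mass1_probability // mule1.
Qed.

Lemma prob_series_abs_cont M :
  (forall n, abs_cont (Ps n) M) -> abs_cont prob_series M.
Proof.
move=> PsM A mA MA; apply: eseries0 => n _ _.
by rewrite (PsM n A mA MA) mule0.
Qed.

Lemma prob_series_eq0 A : (forall n, 0 < lam n) ->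
  prob_series A = 0%E -> forall n, Ps n A = 0%E.
Proof.
move=> lam0 PA0 n.
have term0 k : (0 <= (lam k)%:E * Ps k A)%E by rewrite mule_ge0 // lee_fin ltW.
have : ((lam n)%:E * Ps n A <= 0)%E by rewrite -PA0; exact: nneseries_ge_term.
by rewrite le_eqVlt ltNge term0 orbF mule_eq0 eqe (gt_eqF (lam0 n)) => /eqP.
Qed.

End probability_series.

Definition half_weight {R : realType} (n : nat) : R := 1 / (2 ^ (n + 1))%:R.

Lemma half_weight_gt0 {R : realType} n : 0 < half_weight n :> R.
Proof. by rewrite divr_gt0 // ltr0n expn_gt0. Qed.

Lemma half_weight_sum1 {R : realType} :
  (\sum_(0 <= n <oo) (half_weight n : R)%:E)%E = 1%E.
Proof.
have := @cvg_geometric_eseries_half R 1 0.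
by rewrite expr0 divr1; exact: cvg_lim.
Qed.

Lemma exists_inv_lt_half {R : realType} (e : R) : 0 < e ->
  exists m : nat, (m.+1%:R)^-1 + (m.+1%:R)^-1 < e.
Proof.
move=> e0; exists (Num.truncn (2 / e)); have lt2e := truncnS_gt (2 / e).
rewrite -mulr2n -[_ *+ 2]mulr_natl ltr_pdivrMr ?ltr0n //.
by rewrite mulrC -ltr_pdivrMr.
Qed.

Definition dense_seq_in {R : realType} {T : Type} (dist : T -> T -> R)
    (S : set T) (z : nat -> T) :=
  (forall n, S (z n)) /\
  forall x, S x -> forall e, 0 < e -> exists n, dist x (z n) < e.

Definition subsets_separable {R : realType} {T : Type} (dist : T -> T -> R) :=
  forall (S : set T) x0, S x0 -> exists z, dense_seq_in dist S z.

Section separable_subsets.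
Context {R : realType} {T : Type} {dP : T -> T -> R}.
Hypotheses (dP_sym : forall x y, dP x y = dP y x)
  (dP_tri : forall x y z, dP x z <= dP x y + dP y z).

(* Pick [z (k, m)] in [S] within [1/(m+1)] of the [k]-th point of a countable
   dense set, whenever such a point of [S] exists. *)
Lemma separable_pullback {Th : Type} {dist : Th -> Th -> R} {iota : Th -> T} :
  separable_metric dP -> (forall x y, dP (iota x) (iota y) = dist x y) ->
  subsets_separable dist.
Proof.
move=> [D [/countable_injP[f f_inj] D_dense]] dist_iota S th0 Sth0.
pose near_pt (k m : nat) y :=
  S y /\ exists s, [/\ D s, f s = k & dP (iota y) s < (m.+1%:R)^-1].
pose y k m := if pselect (exists y, near_pt k m y) is left h then projT1 (cid h)
              else th0.
have yS k m : S (y k m).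
  by rewrite /y; case: pselect => [h|//]; case: (projT2 (cid h)).
exists (fun n => if @unpickle (nat * nat)%type n is Some km then y km.1 km.2
                 else th0).
split=> [n|th Sth e e0]; first by case: unpickle.
have [m me] := exists_inv_lt_half e e0.
have m0 : 0 < (m.+1%:R : R)^-1 by rewrite invr_gt0 ltr0n.
have [s Ds ths] := D_dense (iota th) _ m0.
exists (pickle (f s, m)); rewrite pickleK /= /y.
case: pselect => [h|]; last by case; exists th; split => //; exists s.
case: (projT2 (cid h)) => _ [s' [Ds' fs' ys']].
have s'_s : s' = s by apply: f_inj; rewrite ?in_setE.
subst s'.
rewrite -dist_iota; apply: le_lt_trans (dP_tri _ s _) _.
by rewrite (dP_sym s); apply: lt_trans me; exact: ltrD.
Qed.

End separable_subsets.

Lemma polish_pullback {R : realType} {Th : Type} {dist : Th -> Th -> R} :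
  (exists (T : Type) (dP : T -> T -> R) (iota : Th -> T),
      polish_metric dP /\ forall x y, dP (iota x) (iota y) = dist x y) ->
  [/\ forall x y, dist x y = dist y x,
      forall x y z, dist x z <= dist x y + dist y z & subsets_separable dist].
Proof.
move=> [T [dP [iota [[[_ [dP_sym dP_tri]] [_ dP_sep]] dist_iota]]]].
split=> [x y|x y z|]; first by rewrite -!dist_iota.
  by rewrite -!dist_iota.
exact: (separable_pullback dP_sym dP_tri dP_sep dist_iota).
Qed.

Definition dball {R : realType} {T : Type} (dist : T -> T -> R) c r :=
  [set y | dist c y < r].

Section balls.
Context {R : realType} {T : Type} (dist : T -> T -> R).
Hypothesis dist_tri : forall x y z, dist x z <= dist x y + dist y z.

Lemma dball_sub c c' r r' : dist c c' + r' <= r ->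
  dball dist c' r' `<=` dball dist c r.
Proof.
move=> le_r y /= yc'; apply: le_lt_trans (dist_tri c c' y) _.
by apply: lt_le_trans le_r; rewrite ltrD2l.
Qed.

Lemma dball_metric_open c r : metric_open dist (dball dist c r).
Proof.
move=> x /= xc; exists (r - dist c x); first by rewrite subr_gt0.
by move=> y; apply: dball_sub; rewrite addrC subrK.
Qed.

End balls.

Lemma dball_measurable {R : realType} {d} {Th : measurableType d}
    {dist : Th -> Th -> R} :
  (forall x y z, dist x z <= dist x y + dist y z) -> is_borel_of dist ->
  forall c r, measurable (dball dist c r).
Proof.
move=> tri borel c r; apply/borel; apply: sub_gen_smallest.
exact: dball_metric_open.
Qed.

Definition msupport {R : realType} {d} {Th : measurableType d}
    (nu : set Th -> \bar R) (dist : Th -> Th -> R) : set Th :=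
  [set th | forall r, 0 < r -> (0 < nu (dball dist th r))%E].

Lemma probability_nonempty {R : realType} {d} {Th : measurableType d}
    {P : probability Th R} {S : set Th} : P S = 1%E -> S !=set0.
Proof.
move=> PS1; apply/set0P/negP => /eqP S0.
by move: PS1; rewrite S0 measure0 => /eqP; rewrite eqe eq_sym oner_eq0.
Qed.

Section measure_support.
Context {R : realType} {d : measure_display} {Th : measurableType d}.
Context {dist : Th -> Th -> R} {nu : {measure set Th -> \bar R}}.
Context {z : nat -> Th}.
Hypotheses (dist_sym : forall x y, dist x y = dist y x)
  (dist_tri : forall x y z, dist x z <= dist x y + dist y z)
  (dball_meas : forall c r, measurable (dball dist c r))
  (z_dense : dense_seq_in dist setT z).

Let null_ball n m : set Th :=
  let B := dball dist (z n) (m.+1%:R^-1) in if nu B == 0%E then B else set0.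

Let measurable_null_ball n m : measurable (null_ball n m).
Proof. by rewrite /null_ball; case: ifP. Qed.

Lemma setC_msupport : ~` msupport nu dist = \bigcup_n \bigcup_m null_ball n m.
Proof.
apply/seteqP; split => th.
- move=> /existsNP[r /not_implyP[r0 /negP]].
  rewrite -leNgt measure_le0 => /eqP nuB0.
  have [m me] := exists_inv_lt_half r r0.
  have m0 : 0 < (m.+1%:R : R)^-1 by rewrite invr_gt0 ltr0n.
  have [n thz] := z_dense.2 th I _ m0.
  have nuzB0 : nu (dball dist (z n) m.+1%:R^-1) = 0%E.
    apply/eqP; rewrite -measure_le0 -nuB0 le_measure ?inE //.
    by apply: dball_sub => //; apply/ltW/(lt_trans _ me); rewrite ltrD2r.
  exists n => //; exists m => //.
  by rewrite /null_ball /= nuzB0 eqxx /dball /= dist_sym.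
- move=> [n _ [m _]]; rewrite /null_ball /=; case: ifPn => [/eqP nuB0 thz|_ []].
  move=> th_supp; have r0 : 0 < m.+1%:R^-1 - dist (z n) th by rewrite subr_gt0.
  move/(_ _ r0): th_supp; rewrite ltNge => /negP; apply.
  rewrite -nuB0 le_measure ?inE //.
  by apply: dball_sub => //; rewrite addrC subrK.
Qed.

Lemma measurable_msupport : measurable (msupport nu dist).
Proof.
rewrite -[msupport _ _]setCK setC_msupport; apply: measurableC.
by apply: bigcupT_measurable => n; exact: bigcupT_measurable.
Qed.

Lemma msupport_setC0 : nu (~` msupport nu dist) = 0%E.
Proof.
rewrite setC_msupport; apply/negligibleP.
  by apply: bigcupT_measurable => n; exact: bigcupT_measurable.
apply: negligible_bigcup => n; apply: negligible_bigcup => m.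
by apply/negligibleP => //; rewrite /null_ball; case: ifP => [/eqP //|_].
Qed.

End measure_support.

Definition mixture {R : realType} {dT dO : measure_display}
    {Th : measurableType dT} {Om : measurableType dO}
    (nu : probability Th R) (Pth : Th -> probability Om R) : set Om -> \bar R :=
  fun A => (\int[nu]_th Pth th A)%E.

Definition tv_continuous {R : realType} {dT dO : measure_display}
    {Th : measurableType dT} {Om : measurableType dO}
    (dist : Th -> Th -> R) (Pth : Th -> probability Om R) :=
  forall th (eps : R), 0 < eps -> exists2 delta : R, 0 < delta &
    forall th', dist th th' < delta ->
      (ereal_sup [set `|Pth th A - Pth th' A|%E | A in @measurable _ Om]
        < eps%:E)%E.

Section mixture.
Context {R : realType} {dT dO : measure_display}.
Context {Th : measurableType dT} {Om : measurableType dO}.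
Context {dist : Th -> Th -> R} {nu : probability Th R}.
Context {Pth : Th -> probability Om R}.
Hypotheses (Pth_meas : forall A, measurable A ->
    measurable_fun [set: Th] (fun th => Pth th A))
  (Pth_tv : tv_continuous dist Pth).
Hypotheses (dist_sym : forall x y, dist x y = dist y x)
  (dist_tri : forall x y z, dist x z <= dist x y + dist y z)
  (dball_meas : forall c r, measurable (dball dist c r))
  (dist_sep : subsets_separable dist).

Lemma tv_continuous_mass_lb {th A} : measurable A -> (0 < Pth th A)%E ->
  exists2 delta, 0 < delta & exists2 c : R, 0 < c &
    forall th', dist th th' < delta -> (c%:E <= Pth th' A)%E.
Proof.
move=> mA.
have PE t : Pth t A = (fine (Pth t A))%:E by rewrite fineK ?fin_num_measure.
rewrite PE lte_fin; set p := fine (Pth th A) => p0.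
have p20 : 0 < p / 2 by rewrite divr_gt0.
have [delta delta0 near_th] := Pth_tv th _ p20.
exists delta => //; exists (p / 2) => // th' thth'.
have : (`|Pth th A - Pth th' A| < (p / 2)%:E)%E.
  by apply: le_lt_trans (near_th th' thth'); apply: ereal_sup_ubound; exists A.
rewrite (PE th) (PE th') -EFinB abse_EFin lte_fin lee_fin -/p => lt_p2.
by have := ler_norm (p - fine (Pth th' A)); lra.
Qed.

Lemma tv_continuous_limit_eq0 {A th} {z : nat -> Th} : measurable A ->
  (forall n, Pth (z n) A = 0%E) ->
  (forall e, 0 < e -> exists n, dist th (z n) < e) -> Pth th A = 0%E.
Proof.
move=> mA z0 th_lim; apply/eqP; rewrite -measure_le0 leNgt; apply/negP => PA0.
have [delta delta0 [c c0 lb]] := tv_continuous_mass_lb mA PA0.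
have [n thz] := th_lim _ delta0.
by have := lb _ thz; rewrite z0 lee_fin leNgt c0.
Qed.

Lemma abs_cont_mixture {th} :
  msupport nu dist th -> abs_cont (Pth th) (mixture nu Pth).
Proof.
move=> th_supp A mA mix0.
apply/eqP; rewrite -measure_le0 leNgt; apply/negP => PA0.
have [delta delta0 [c c0 lb]] := tv_continuous_mass_lb mA PA0.
have : (c%:E * nu (dball dist th delta) <= mixture nu Pth A)%E.
  rewrite -[dball _ _ _]setIT -integral_indic //.
  rewrite -(integralZl_indic _ (fun=> dball dist th delta)) //; last first.
    by move=> /ltW; rewrite leNgt c0.
  apply: ge0_le_integral => //.
  - by move=> x _; rewrite lee_fin mulr_ge0 ?(ltW c0) // indicE ler0n.
  - by apply/measurable_EFinP; apply: measurable_funM.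
  - exact: Pth_meas.
  move=> x _; rewrite indicE; case: (boolP (x \in _)) => [/set_mem/lb|_].
    by rewrite mulr1.
  by rewrite mulr0.
by rewrite mix0 leNgt mule_gt0 ?lte_fin // th_supp.
Qed.

Lemma mixture_eq0 {S A} : measurable S -> nu (~` S) = 0%E -> measurable A ->
  (forall th, S th -> Pth th A = 0%E) -> mixture nu Pth A = 0%E.
Proof.
move=> mS nuS0 mA PA0; apply/eqP; rewrite eq_le integral_ge0 ?andbT //.
have mCS : measurable (~` S) by exact: measurableC.
rewrite -nuS0 -[~` S]setIT -integral_indic //.
apply: ge0_le_integral => //; first exact: Pth_meas.
  by apply/measurable_EFinP; exact: measurable_indic.
move=> th _; rewrite indicE; case: (boolP (th \in ~` S)) => [_|/negP thS].
  exact: probability_le1.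
by rewrite PA0 //; apply: contrapT => nS; apply: thS; rewrite inE.
Qed.

Lemma setC_mass1_mixture : setC_mass1 (mixture nu Pth).
Proof.
move=> E mE; rewrite /mixture -ge0_integralD //; last 2 first.
- exact: Pth_meas.
- by apply: Pth_meas; exact: measurableC.
transitivity (\int[nu]_(x in setT) (cst 1%E x))%E.
  by apply: eq_integral => th _; exact: setC_mass1_probability.
by rewrite integral_cst // mul1e; exact: probability_setT.
Qed.

Lemma msupport_full : [/\ measurable (msupport nu dist),
  nu (~` msupport nu dist) = 0%E & nu (msupport nu dist) = 1%E].
Proof.
have [th0 _] := probability_nonempty (probability_setT nu).
have [z0 z0_dense] := dist_sep setT th0 I.
have mS : measurable (msupport nu dist).
  exact: measurable_msupport dist_sym dist_tri dball_meas z0_dense.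
have nuCS : nu (~` msupport nu dist) = 0%E.
  exact: msupport_setC0 dist_sym dist_tri dball_meas z0_dense.
split=> //; rewrite -[msupport _ _]setCK probability_setC ?nuCS ?sube0 //.
exact: measurableC.
Qed.

Lemma mixture_abs_cont_series : exists z : nat -> Th,
  (forall n, msupport nu dist (z n)) /\
  abs_cont (mixture nu Pth) (prob_series half_weight (Pth \o z)).
Proof.
have [mS nuCS nuS] := msupport_full.
have [th1 Sth1] := probability_nonempty nuS.
have [z [zS z_dense]] := dist_sep _ _ Sth1.
exists z; split => // A mA /prob_series_eq0 Pz0.
apply: (mixture_eq0 mS nuCS mA) => th Sth.
apply: (tv_continuous_limit_eq0 mA _ (z_dense th Sth)).
exact: Pz0 half_weight_gt0.
Qed.

End mixture.

Theorem theorem6p10 (R : realType)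
  (dO : measure_display) (Om : measurableType dO)
  (dT : measure_display) (Th : measurableType dT)
  (dist : Th -> Th -> R)
  (Hpolish : exists (T : Type) (dP : T -> T -> R) (iota : Th -> T),
      polish_metric dP /\ forall x y, dP (iota x) (iota y) = dist x y)
  (Hborel : is_borel_of dist)
  (nu : probability Th R)
  (Pth : Th -> probability Om R)
  (Hmeas : forall A : set Om, measurable A -> measurable_fun [set: Th] (fun th => (Pth th A : \bar R)))
  (Htv : forall th (eps : R), 0 < eps -> exists2 delta : R, 0 < delta &
      forall th', dist th th' < delta ->
        (ereal_sup [set `|Pth th A - Pth th' A|%E | A in @measurable _ Om]
          < eps%:E)%E) :
  let mix : set Om -> \bar R := fun A => (\int[nu]_th Pth th A)%E in
  exists Th1 : set Th,
    [/\ measurable Th1, nu Th1 = 1%E,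
        (forall th, Th1 th -> abs_cont (Pth th) mix) &
        let cM1 : set (set Om -> \bar R) :=
          [set P | exists (lam : nat -> R) (ths : nat -> Th),
             [/\ forall n, 0 <= lam n,
                 (\sum_(0 <= n <oo) (lam n)%:E)%E = 1%E,
                 forall n, Th1 (ths n) &
                 P = (fun A => \sum_(0 <= n <oo) ((lam n)%:E * Pth (ths n) A))%E]] in
        forall (rho : (Om -> R) -> R) (alpha : probability Om R -> \bar R),
          monetary_risk_measure rho ->
          (forall Q, alpha Q <> -oo%E) ->
          forall X : Om -> R, Linfty mix X ->
            ereal_sup [set rhohat_P alpha P X | P in cM1] = rhohat_P alpha mix X /\
            ereal_sup [set rho_P rho P X | P in cM1] = rho_P rho mix X].
Proof.
move=> mix; rewrite -[mix]/(mixture nu Pth).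
have Pth_tv : tv_continuous dist Pth := Htv.
have [dist_sym dist_tri dist_sep] := polish_pullback Hpolish.
have dball_meas := dball_measurable dist_tri Hborel.
have abs_cont_mix th := abs_cont_mixture Hmeas Pth_tv dball_meas (th := th).
have [mS _ nuS] :=
  msupport_full (nu := nu) dist_sym dist_tri dball_meas dist_sep.
have [z [zS mixP0]] :=
  mixture_abs_cont_series (nu := nu) Hmeas Pth_tv
    dist_sym dist_tri dball_meas dist_sep.
exists (msupport nu dist); split => // [|cM1 rho alpha _ _ X [mX _]].
  exact: abs_cont_mix.
apply: (risk_sups_dominated mX _ _ mixP0 (setC_mass1_mixture Hmeas)).
- move=> _ [lam [ths [lam0 lam1 thsS ->]]]; split.
    by apply: prob_series_abs_cont => n; exact: abs_cont_mix.
  exact: setC_mass1_prob_series.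
- exists half_weight, z; split => //; last exact: half_weight_sum1.
  by move=> n; exact/ltW/half_weight_gt0.
Qed.
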